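(* Let $A$ be a finite alphabet. If $X\subseteq A^*$ is a regular language, then $W(X)$ is a regular language over $\{0,\dots,|A|-1\}$. In particular, if $X\subseteq A^{\mathbb{N}}$ is a (one-sided) sofic shift, then $W(X)$ is a sofic shift.
   Context: Winning set: for $n\in\mathbb{N}\cup\{\mathbb{N}\}$ and $X\subseteq A^n$, a choice sequence $\alpha=\alpha_0\alpha_1\cdots$ of length $n$ over $\{0,\dots,|A|-1\}$ determines a game: in round $j$ Alice chooses $A_j\subseteq A$ with $|A_j|=\alpha_j+1$, then Bob chooses $a_j\in A_j$; Alice wins if the produced word $a_0a_1\cdots$ lies in $X$. $W(X)$ is the set of choice sequences for which Alice has a winning strategy. For a set $X$ of words of various lengths, $W(X)=\bigcup_{n\in\mathbb{N}\cup\{\mathbb{N}\}}W(X\cap A^n)$. A one-sided sofic shift is the set of labels of right-infinite paths in a finite edge-labeled graph. *)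

From mathcomp Require Import all_boot.
Set Implicit Arguments. Unset Strict Implicit. Unset Printing Implicit Defensive.

Record dfa (T : finType) := DFA {
  dfa_state : finType;
  dfa_s0 : dfa_state;
  dfa_fin : pred dfa_state;
  dfa_trans : dfa_state -> T -> dfa_state }.

Definition dfa_accept (T : finType) (M : dfa T) (w : seq T) : bool :=
  @dfa_fin T M (foldl (@dfa_trans T M) (@dfa_s0 T M) w).

Definition regular (T : finType) (L : seq T -> Prop) : Prop :=
  exists M : dfa T, forall w, L w <-> dfa_accept M w.

(* One-sided sofic shift: the set of labels of right-infinite paths in a
   finite edge-labeled graph (vertex type V, labeled edge relation e u a v). *)
Definition sofic (T : finType) (X : (nat -> T) -> Prop) : Prop :=
  exists (V : finType) (e : V -> T -> V -> bool),
    forall x : nat -> T, X x <-> exists v : nat -> V, forall i, e (v i) (x i) (v i.+1).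

Notation choice_alph A := ('I_#|A|).

(* A strategy for Alice: given the history a_0...a_{j-1} of Bob's moves,
   the set A_j she offers. *)
Definition strategy (A : finType) := seq A -> {set A}.

(* Finite game of length n = size alpha: alpha is in W(X ∩ A^n). *)
Definition Wfin (A : finType) (X : seq A -> Prop) (alpha : seq (choice_alph A)) : Prop :=
  exists sigma : strategy A,
    (forall u i v, alpha = u ++ i :: v ->
       forall h : seq A, size h = size u -> #|sigma h| = (nat_of_ord i).+1) /\
    (forall w : seq A, size w = size alpha ->
       (forall u a v, w = u ++ a :: v -> a \in sigma u) -> X w).

Definition Winf (A : finType) (X : (nat -> A) -> Prop) (alpha : nat -> choice_alph A) : Prop :=
  exists sigma : strategy A,
    (forall h : seq A, #|sigma h| = (nat_of_ord (alpha (size h))).+1) /\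
    (forall x : nat -> A, (forall j, x j \in sigma (mkseq x j)) -> X x).

From mathcomp Require Import all_boot.
From mathcomp Require Import boolp.
Set Implicit Arguments. Unset Strict Implicit. Unset Printing Implicit Defensive.

(* The game is analysed by backward induction: Alice wins
   [i :: al] for X exactly when she can offer i+1 letters a each of which
   leaves her a win of [al] for the residual language {w | X (a :: w)}
   (Wfin_cons).  For X recognised by an automaton with states S this turns
   into a monotone operator [fstep i] on sets of states, and the states
   winning [alpha] are obtained by folding these operators along alpha
   (Wfin_automaton).  An automaton reading alpha from the left keeps the
   composite map {set S} -> {set S}, a finite amount of data (WDFA).

   For X the label set of a finite graph on V, a word lies in
   X iff the set of vertices reachable along each of its prefixes is nonempty
   (a König argument, labels_reach).  A position of the game is thus the set
   of currently reachable vertices; the graph for W(X) has as vertices the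
   families Y of such sets, with an edge Y -i-> Y' when Y contains the
   initial position and every q in Y is nonempty and has more than i
   letters leading into Y'.  A path of families
   yields a strategy (labels_Winf_sound); conversely the families of positions
   from which Alice still wins give such a path (labels_Winf_complete). *)

Definition takeset (T : finType) (n : nat) (S : {set T}) : {set T} :=
  [set a in take n (enum S)].

Lemma card_takeset (T : finType) n (S : {set T}) : #|takeset n S| = minn n #|S|.
Proof.
rewrite /takeset cardsE (card_uniqP _) ?take_uniq ?enum_uniq //.
by rewrite size_take_min cardE.
Qed.

Lemma takeset_sub (T : finType) n (S : {set T}) : takeset n S \subset S.
Proof. by apply/subsetP => a; rewrite inE => /mem_take; rewrite mem_enum. Qed.

Lemma ltn_card_subset (T : finType) i (G : {set T}) :
  i < #|G| <-> exists2 S : {set T}, #|S| = i.+1 & S \subset G.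
Proof.
split=> [ltiG | [S <- /subset_leq_card //]].
by exists (takeset i.+1 G); [rewrite card_takeset; apply/minn_idPl | exact: takeset_sub].
Qed.

Section Strategies.
Variable A : finType.
Implicit Types (sigma : strategy A) (w h : seq A).

Definition follows sigma w := forall u a v, w = u ++ a :: v -> a \in sigma u.

Lemma follows_nil sigma : follows sigma [::].
Proof. by case. Qed.

Lemma follows_cons sigma a w :
  follows sigma (a :: w) <-> a \in sigma [::] /\ follows (fun h => sigma (a :: h)) w.
Proof.
split=> [fw | [a_in fw] [|c u] b v [<-] //].
  by split=> [|u b v E]; [apply: (fw [::] a w) | apply: (fw (a :: u)); rewrite E].
exact: fw.
Qed.

Lemma follows_cat sigma g h :
  follows sigma (g ++ h) <-> follows sigma g /\ follows (fun k => sigma (g ++ k)) h.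
Proof.
elim: g sigma => [|a g IH] sigma /=.
  by split=> [|[]//]; split=> //; apply: follows_nil.
rewrite !follows_cons IH; tauto.
Qed.

Lemma follows_rcons sigma w a :
  follows sigma (rcons w a) <-> follows sigma w /\ a \in sigma w.
Proof.
rewrite -cats1 follows_cat follows_cons cats0.
by split=> [[? []] | [? ?]] //; do !split=> //; apply: follows_nil.
Qed.

Lemma follows_nth sigma a0 w k :
  follows sigma w -> k < size w -> nth a0 w k \in sigma (take k w).
Proof.
move=> fw ltkw; apply: (fw _ _ (drop k.+1 w)).
by rewrite -(drop_nth a0 ltkw) cat_take_drop.
Qed.

Definition plays sigma (y : nat -> A) := forall j, y j \in sigma (mkseq y j).

Lemma plays_prefix sigma y n : plays sigma y -> follows sigma (mkseq y n).
Proof.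
move=> py; elim: n => [|n IH]; first exact: follows_nil.
by rewrite mkseqS follows_rcons.
Qed.

Lemma follows_extend sigma g :
  (forall h, 0 < #|sigma h|) -> follows sigma g ->
  exists2 y, plays sigma y & mkseq y (size g) = g.
Proof.
move=> sigma_gt0 fg; have /card_gt0P [a0 _] := sigma_gt0 [::].
pose pk h := odflt a0 [pick a in sigma h].
have pk_in h : pk h \in sigma h.
  rewrite /pk; case: pickP => [a //| none].
  by have := sigma_gt0 h; rewrite (eq_card0 none).
pose next n h := if n < size g then nth a0 g n else pk h.
pose fix hist n := if n is n'.+1 then rcons (hist n') (next n' (hist n')) else [::].
pose y n := next n (hist n).
have mkseq_y n : mkseq y n = hist n by elim: n => // n IH; rewrite mkseqS IH.
have hist_g n : n <= size g -> hist n = take n g.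
  elim: n => [|n IH] ltng /=; first by rewrite take0.
  by rewrite IH ?(ltnW ltng) // /next ltng (take_nth a0 ltng).
exists y; last by rewrite mkseq_y hist_g // take_size.
move=> n; rewrite mkseq_y /y /next; case: ifP => [ltng | _]; last exact: pk_in.
by rewrite hist_g ?(ltnW ltng) //; apply: follows_nth.
Qed.

End Strategies.

Section FiniteGames.
Variable A : finType.
Implicit Types (X : seq A -> Prop) (sigma : strategy A) (alpha : seq (choice_alph A)).

Definition sized alpha sigma :=
  forall u i v, alpha = u ++ i :: v ->
    forall h : seq A, size h = size u -> #|sigma h| = (nat_of_ord i).+1.

Lemma Wfin_ext X Y alpha : (forall w, X w <-> Y w) -> Wfin X alpha <-> Wfin Y alpha.
Proof.
move=> XY; split=> -[sigma [sz win]]; exists sigma; split=> // w ? ?.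
  by apply/XY; apply: win.
by apply/XY; apply: win.
Qed.

Lemma Wfin_nil X : Wfin X [::] <-> X [::].
Proof.
split=> [[sigma [_ win]] | X0]; first by apply: win => //; apply: follows_nil.
by exists (fun=> set0); split=> [[] | []].
Qed.

Lemma Wfin_cons X i al :
  Wfin X (i :: al) <->
  exists2 S : {set A}, #|S| = i.+1 & forall a, a \in S -> Wfin (fun w => X (a :: w)) al.
Proof.
split=> [[sigma [sz win]] | [S cardS winS]].
  exists (sigma [::]); first exact: (sz [::] i al).
  move=> a aS; exists (fun h => sigma (a :: h)); split.
    by move=> u j v E h hu; apply: (sz (i :: u) j v); rewrite ?E //= hu.
  by move=> w sw fw; apply: win => /=; [rewrite sw | apply/follows_cons].
have /card_gt0P [b bS] : 0 < #|S| by rewrite cardS.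
have residual a : exists s, sized al s /\
    (a \in S -> forall w, size w = size al -> follows s w -> X (a :: w)).
  case: (boolP (a \in S)) => [aS | _]; first by have [s []] := winS a aS; exists s.
  by have [s [sz _]] := winS b bS; exists s.
case: (choice residual) => strat Hstrat.
exists (fun h => if h is a :: h' then strat a h' else S); split.
  move=> [|c u] j v /= [Ei E] [|a h] //=; first by rewrite -Ei.
  by move=> [hu]; apply: (proj1 (Hstrat a) u j v E h hu).
move=> [//|a w] /= [sw] /follows_cons [aS fw].
exact: (proj2 (Hstrat a) aS w sw fw).
Qed.

Definition fstep (S : finType) (d : S -> A -> S) (i : choice_alph A) (P : {set S}) :
  {set S} := [set q | i < #|[set a | d q a \in P]|].

Lemma Wfin_automaton (S : finType) (fin : pred S) (d : S -> A -> S) alpha q :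
  Wfin (fun w => fin (foldl d q w)) alpha <-> q \in foldr (fstep d) [set q | fin q] alpha.
Proof.
elim: alpha q => [|i al IH] q; first by rewrite Wfin_nil inE.
rewrite Wfin_cons /= inE ltn_card_subset.
split=> -[T cardT winT]; exists T => //.
  by apply/subsetP => a aT; rewrite inE; apply/IH; apply: winT.
by move=> a aT; apply/IH; move/subsetP/(_ a aT): winT; rewrite inE.
Qed.

(* The automaton for W(X): it stores the composite of the fstep operators
   read so far. *)
Definition WDFA (M : dfa A) : dfa (choice_alph A) :=
  @DFA _ {ffun {set dfa_state M} -> {set dfa_state M}}
    [ffun P => P]
    (fun g => @dfa_s0 _ M \in g [set q | @dfa_fin _ M q])
    (fun g i => [ffun P => g (fstep (@dfa_trans _ M) i P)]).

Lemma WDFA_fold (M : dfa A) alpha g :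
  foldl (@dfa_trans _ (WDFA M)) g alpha =
  [ffun P => g (foldr (fstep (@dfa_trans _ M)) P alpha)].
Proof.
elim: alpha g => [|i al IH] g /=; first by apply/ffunP => P; rewrite ffunE.
by rewrite IH; apply/ffunP => P; rewrite !ffunE.
Qed.

Lemma regular_Wfin X : regular X -> regular (Wfin X).
Proof.
case=> M HM; exists (WDFA M) => alpha.
rewrite (Wfin_ext _ HM) Wfin_automaton.
by rewrite /dfa_accept WDFA_fold /= !ffunE.
Qed.

End FiniteGames.

Lemma uniform_witness (T : finType) (P : nat -> T -> Prop) :
  (forall m m' t, m <= m' -> P m' t -> P m t) ->
  (forall m, exists t, P m t) -> exists t, forall m, P m t.
Proof.
move=> antiP witness; apply: contrapT => none.
have fails t : exists m, ~ P m t.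
  by apply/existsNP => Pt; apply: none; exists t.
have [bound Hbound] := fin_all_exists fails.
have [t Pt] := witness (\max_t bound t).
by apply: (Hbound t); apply: antiP (leq_bigmax t) Pt.
Qed.

Lemma dependent_chain (T : Type) (G : nat -> T -> Prop) (R : nat -> T -> T -> Prop) t0 :
  G 0 t0 -> (forall n t, G n t -> exists t', R n t t' /\ G n.+1 t') ->
  exists p : nat -> T, forall n, R n (p n) (p n.+1).
Proof.
move=> G0 step.
have next (nt : nat * T) : exists t', G nt.1 nt.2 -> R nt.1 nt.2 t' /\ G nt.1.+1 t'.
  case: (pselect (G nt.1 nt.2)) => [Gnt | nGnt]; last by exists nt.2.
  by have [t' ?] := step _ _ Gnt; exists t'.
case: (choice next) => f Hf.
pose fix p n := if n is n'.+1 then f (n', p n') else t0.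
have Gp n : G n (p n) by elim: n => // n IH; apply: (Hf (n, p n) IH).2.
by exists p => n; apply: (Hf (n, p n) (Gp n)).1.
Qed.

Lemma Winf_ext (A : finType) (X Y : (nat -> A) -> Prop) alpha :
  (forall x, X x <-> Y x) -> Winf X alpha <-> Winf Y alpha.
Proof.
move=> XY; split=> -[sigma [sz win]]; exists sigma; split=> // x ?.
  by apply/XY; apply: win.
by apply/XY; apply: win.
Qed.

Section GraphLabels.
Variables (A V : finType) (e : V -> A -> V -> bool).
Implicit Types (x : nat -> A) (P q : {set V}) (h : seq A).

Definition labels x := exists v : nat -> V, forall i, e (v i) (x i) (v i.+1).

Definition post P a : {set V} := [set w | [exists v in P, e v a w]].
Definition reach P h : {set V} := foldl post P h.

Lemma reach_mono h P P' : P \subset P' -> reach P h \subset reach P' h.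
Proof.
elim: h P P' => //= a h IH P P' sPP'; apply: IH; apply/subsetP => w; rewrite !inE.
by case/existsP => v /andP [vP ev]; apply/existsP; exists v; rewrite (subsetP sPP' _ vP).
Qed.

Lemma reach_path x n w :
  w \in reach setT (mkseq x n) ->
  exists2 p : nat -> V, p n = w & forall i, i < n -> e (p i) (x i) (p i.+1).
Proof.
elim: n w => [|n IH] w; first by exists (fun=> w).
rewrite /reach mkseqS foldl_rcons inE => /existsP [v /andP [vreach evw]].
have [p pn Hp] := IH v vreach.
exists (fun i => if i == n.+1 then w else p i); first by rewrite eqxx.
move=> i lti; rewrite (ltn_eqF lti) eqSS.
case: eqP => [-> | neq]; first by rewrite pn.
by apply: Hp; rewrite ltn_neqAle; apply/andP; split; [apply/eqP | rewrite -ltnS].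
Qed.

Definition segment x n m v :=
  exists2 p : nat -> V, p 0 = v & forall i, i < m -> e (p i) (x (n + i)) (p i.+1).

Lemma segment_shorter x n m m' v : m <= m' -> segment x n m' v -> segment x n m v.
Proof.
by move=> lemm' [p p0 Hp]; exists p => // i ltim; apply: Hp (leq_trans ltim lemm').
Qed.

(* A vertex is good at time n when paths of every length start from it; a
   good vertex has a good successor by finiteness (uniform_witness). *)
Lemma konig x :
  (forall m, exists p : nat -> V, forall i, i < m -> e (p i) (x i) (p i.+1)) ->
  labels x.
Proof.
move=> paths; pose good n v := forall m, segment x n m v.
have [v0 good0] : exists v, good 0 v.
  apply: uniform_witness => [m m' v|m]; first exact: segment_shorter.
  by have [p Hp] := paths m; exists (p 0), p => // i; rewrite add0n; apply: Hp.
have goodS n v : good n v -> exists w, e v (x n) w /\ good n.+1 w.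
  move=> gv.
  have [w Hw] : exists w, forall m, e v (x n) w /\ segment x n.+1 m w.
    apply: uniform_witness => [m m' w lemm' [? ?] | m].
      by split=> //; apply: segment_shorter lemm' _.
    have [p p0 Hp] := gv m.+1; exists (p 1); split.
      by rewrite -p0 -[n]addn0; apply: Hp.
    by exists (fun i => p i.+1) => // i ltim; rewrite addSnnS; apply: Hp.
  by exists w; split=> [|m]; [apply: (Hw 0).1 | apply: (Hw m).2].
exact: dependent_chain good0 goodS.
Qed.

Lemma labels_reach x : labels x <-> forall n, reach setT (mkseq x n) != set0.
Proof.
split=> [[v Hv] n | nonempty].
  apply/set0Pn; exists (v n); elim: n => [|n IH]; first by rewrite inE.
  by rewrite /reach mkseqS foldl_rcons inE; apply/existsP; exists (v n); rewrite IH Hv.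
apply: konig => m; have /set0Pn [w /reach_path [p _ Hp]] := nonempty m.
by exists p.
Qed.

Definition advance (i : nat) (Y' : {set {set V}}) : {set {set V}} :=
  [set q | (q != set0) && (i < #|[set a | post q a \in Y']|)].

Definition wedge (Y : {set {set V}}) (i : choice_alph A) (Y' : {set {set V}}) : bool :=
  (setT \in Y) && (Y \subset advance i Y').

Variable alpha : nat -> choice_alph A.

(* Along a path of families, Alice keeps the current position in the
   family and offers letters leading into the next one. *)
Lemma labels_Winf_sound (Z : nat -> {set {set V}}) :
  (forall j, wedge (Z j) (alpha j) (Z j.+1)) -> Winf labels alpha.
Proof.
move=> edgeZ.
pose offer h := if reach setT h \in Z (size h)
  then [set a | post (reach setT h) a \in Z (size h).+1] else setT.
exists (fun h => takeset (alpha (size h)).+1 (offer h)); split.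
  move=> h; rewrite card_takeset; apply/minn_idPl; rewrite /offer.
  case: ifP => [inZ | _]; last by rewrite cardsT ltn_ord.
  by case/andP: (edgeZ (size h)) => _ /subsetP/(_ _ inZ); rewrite inE => /andP [].
move=> x px; apply/labels_reach.
have inZ n : reach setT (mkseq x n) \in Z n.
  elim: n => [|n IH]; first by case/andP: (edgeZ 0).
  move/(subsetP (takeset_sub _ _)): (px n); rewrite /offer size_mkseq IH inE.
  by rewrite /reach mkseqS foldl_rcons.
by move=> n; case/andP: (edgeZ n) => _ /subsetP/(_ _ (inZ n)); rewrite inE => /andP [].
Qed.

Definition winpos (j : nat) (q : {set V}) :=
  exists tau : strategy A, (forall h, #|tau h| = (alpha (j + size h)).+1) /\
    forall h, follows tau h -> reach q h != set0.

(* If Alice wins W(labels), the initial position is winning at every round j: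
   follow any consistent prefix of length j, then keep playing sigma. *)
Lemma winpos_start j : Winf labels alpha -> winpos j setT.
Proof.
case=> sigma [sz win].
have sigma_gt0 h : 0 < #|sigma h| by rewrite sz.
have [y py _] := follows_extend sigma_gt0 (follows_nil sigma).
pose g := mkseq y j; have fg : follows sigma g by apply: plays_prefix.
exists (fun h => sigma (g ++ h)); split=> [h | h fh].
  by rewrite sz size_cat size_mkseq.
have [y' py' y'gh] := follows_extend sigma_gt0 (proj2 (follows_cat _ _ _) (conj fg fh)).
have := proj1 (labels_reach y') (win y' py') (size (g ++ h)).
rewrite y'gh /reach foldl_cat => /set0Pn [v vin]; apply/set0Pn; exists v.
exact: subsetP (reach_mono h (subsetT _)) v vin.
Qed.

Lemma winpos_step j q :
  winpos j q -> q != set0 /\ alpha j < #|[set a | `[< winpos j.+1 (post q a) >]]|.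
Proof.
case=> tau [sz win]; split; first exact: (win [::] (follows_nil tau)).
have card0 : #|tau [::]| = (alpha j).+1 by rewrite sz addn0.
rewrite -card0; apply: subset_leq_card; apply/subsetP => a a_in; rewrite inE.
apply/asboolP; exists (fun h => tau (a :: h)); split=> [h | h fh].
  by rewrite sz /= addSnnS.
by apply: (win (a :: h)); apply/follows_cons.
Qed.

Lemma labels_Winf_complete :
  Winf labels alpha ->
  exists Z : nat -> {set {set V}}, forall j, wedge (Z j) (alpha j) (Z j.+1).
Proof.
move=> Walpha; exists (fun j => [set q | `[< winpos j q >]]) => j; apply/andP; split.
  by rewrite inE; apply/asboolP; apply: winpos_start.
apply/subsetP => q; rewrite !inE => /asboolP/winpos_step [-> /= lt].
by apply: leq_trans lt _; apply: subset_leq_card; apply/subsetP => a; rewrite !inE.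
Qed.

End GraphLabels.

Lemma sofic_Winf (A : finType) (X : (nat -> A) -> Prop) : sofic X -> sofic (Winf X).
Proof.
case=> V [e HX]; exists {set {set V}}, (wedge e) => alpha.
rewrite (Winf_ext _ HX); split; first exact: labels_Winf_complete.
by case=> Z; apply: labels_Winf_sound.
Qed.

Theorem mainTheorem11 (A : finType) :
  (forall X : seq A -> Prop, regular X -> regular (Wfin X)) /\
  (forall X : (nat -> A) -> Prop, sofic X -> sofic (Winf X)).
Proof. by split; [apply: regular_Wfin | apply: sofic_Winf]. Qed.
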